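(* Let $\pi$ be a projective plane of order $q$ and let $n$ be an integer with $2\le q-n\le q$. Let $\phi$ be an embedding of the complete bipartite graph $G=K_{q-n,q}$ into $\pi$, with vertex classes $U,V$, $|U|=q-n$, $|V|=q$. If $q>n^2$, then the points $\phi(U\cup V)$ lie on the union of two lines of $\pi$.
   Context: A finite projective plane of order $q$ has $q^2+q+1$ points and lines, $q+1$ points on each line and $q+1$ lines through each point; any two distinct points lie on a unique line and any two lines meet in a unique point. An embedding of a simple graph $G=(V,E)$ into $\pi$ is an injective map $\phi$ from $V$ to the points of $\pi$ such that the induced map sending an edge $ab$ to the line through $\phi(a),\phi(b)$ is injective on $E$. *)

From mathcomp Require Import all_boot.
Set Implicit Arguments. Unset Strict Implicit. Unset Printing Implicit Defensive.

Definition projective_plane (P L : finType) (inc : P -> L -> bool) (q : nat) : Prop :=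
  [/\ #|P| = q ^ 2 + q + 1 /\ #|L| = q ^ 2 + q + 1,
      (forall l : L, #|[set p | inc p l]| = q.+1),
      (forall p : P, #|[set l | inc p l]| = q.+1),
      (forall p1 p2 : P, p1 != p2 ->
         exists! l : L, inc p1 l && inc p2 l)
    & (forall l1 l2 : L, l1 != l2 ->
         exists! p : P, inc p l1 && inc p l2)].

Definition pjoin (P L : finType) (inc : P -> L -> bool) (p1 p2 : P) : option L :=
  [pick l | inc p1 l && inc p2 l].

(* Vertex set of the complete bipartite graph K_{a,b}: classes U = 'I_a, V = 'I_b;
   edges are exactly the pairs {inl u, inr v}. *)
Definition Kvert (a b : nat) : finType := ('I_a + 'I_b)%type.

Definition embedding_Kab (P L : finType) (inc : P -> L -> bool) (a b : nat)
    (phi : Kvert a b -> P) : Prop :=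
  injective phi /\
  (forall (u u' : 'I_a) (v v' : 'I_b),
     pjoin inc (phi (inl u)) (phi (inr v)) = pjoin inc (phi (inl u')) (phi (inr v')) ->
     u = u' /\ v = v').

From mathcomp Require Import all_boot.
From mathcomp Require Import zify.
Set Implicit Arguments. Unset Strict Implicit. Unset Printing Implicit Defensive.

(* Write U, V for the images of the two vertex classes. All of U lies on one
   line l: the q lines joining a point u0 of U to the points of V are
   distinct and avoid U \ {u0}, so only one line through u0 is left for the
   rest of U. If V is not collinear, fix v0 in V and project V \ {v0} from v0
   onto l: the image lies in the n + 1 points W of l outside U, and the line
   joining v0 to a point of W carries at most n points of V (project it from a
   point of V off it into W minus one point). Hence q - 1 <= (n + 1)(n - 1),
   contradicting q > n^2. *)

Lemma card_le_bigcup (T I : finType) (A : {set T}) (J : {set I})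
    (B : I -> {set T}) k :
  A \subset \bigcup_(i in J) B i -> {in J, forall i, #|B i| <= k} ->
  #|A| <= #|J| * k.
Proof.
move=> sAB leBk; apply: leq_trans (subset_leq_card sAB) _.
rewrite -sum_nat_const; apply: leq_trans (leq_sum _ leBk).
elim/big_rec2: _ => [|i n S _ leSn]; first by rewrite cards0.
by rewrite (leq_trans (leq_card_setU _ _).1) ?leq_add2l.
Qed.

Section ProjectivePlane.

Variables (P L : finType) (inc : P -> L -> bool) (q : nat).
Hypothesis plane : projective_plane inc q.

Definition collinear (x y z : P) := [exists l, [&& inc x l, inc y l & inc z l]].

Lemma card_line l : #|[set p | inc p l]| = q.+1.
Proof. by case: plane. Qed.

Lemma card_pencil p : #|[set l | inc p l]| = q.+1.
Proof. by case: plane. Qed.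

Lemma line_through p1 p2 : p1 != p2 -> exists l, inc p1 l && inc p2 l.
Proof. by case: plane => _ _ _ join _ /join[l []]; exists l. Qed.

Lemma meet_point l1 l2 : l1 != l2 -> exists p, inc p l1 && inc p l2.
Proof. by case: plane => _ _ _ _ meet /meet[p []]; exists p. Qed.

Lemma line_uniq p1 p2 l l' : p1 != p2 -> inc p1 l -> inc p2 l ->
  inc p1 l' -> inc p2 l' -> l = l'.
Proof.
case: plane => _ _ _ join _ /join[l0 [_ uniq]] p1l p2l p1l' p2l'.
by rewrite -(uniq l) ?p1l ?p2l // -(uniq l') ?p1l' ?p2l'.
Qed.

Lemma pjoin_eq p1 p2 l : p1 != p2 -> inc p1 l -> inc p2 l ->
  pjoin inc p1 p2 = Some l.
Proof.
move=> n12 p1l p2l; rewrite /pjoin; case: pickP => [l' /andP[p1l' p2l'] | none].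
  by rewrite (line_uniq n12 p1l' p2l' p1l p2l).
by have := none l; rewrite p1l p2l.
Qed.

Section BipartiteConfiguration.

Variables U V : {set P}.
Hypothesis UV_disjoint : [disjoint U & V].
Hypothesis edge_lineU : forall l u u' v, u \in U -> u' \in U -> v \in V ->
  inc u l -> inc u' l -> inc v l -> u = u'.
Hypothesis edge_lineV : forall l u v v', u \in U -> v \in V -> v' \in V ->
  inc u l -> inc v l -> inc v' l -> v = v'.
Hypothesis U_gt1 : 1 < #|U|.
Hypothesis V_ge : q <= #|V|.

Lemma neq_UV u v : u \in U -> v \in V -> u != v.
Proof.
by move=> uU vV; apply: contraTneq uU => ->; rewrite (disjointFl UV_disjoint).
Qed.

Lemma secantUU_offV l u u' v : u \in U -> u' \in U -> v \in V -> u != u' ->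
  inc u l -> inc u' l -> ~~ inc v l.
Proof.
move=> uU u'U vV nuu' ul u'l; apply/negP => vl.
by rewrite (edge_lineU uU u'U vV ul u'l vl) eqxx in nuu'.
Qed.

Lemma secantVV_offU l u v v' : u \in U -> v \in V -> v' \in V -> v != v' ->
  inc v l -> inc v' l -> ~~ inc u l.
Proof.
move=> uU vV v'V nvv' vl v'l; apply/negP => ul.
by rewrite (edge_lineV uU vV v'V ul vl v'l) eqxx in nvv'.
Qed.

Lemma U_collinear : exists lU, {in U, forall u, inc u lU}.
Proof.
have /card_gt1P[u0 [u1 [u0U u1U n01]]] := U_gt1.
have [lU /andP[u0lU u1lU]] := line_through n01.
exists lU => u uU; case: (eqVneq u0 u) => [<- // | n0u].
have [m /andP[u0m um]] := line_through n0u.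
case: (eqVneq lU m) => [-> // | nlm]; exfalso.
pose S := [set l | inc u0 l] :\: [set lU; m].
have : #|V| <= #|S| * 1.
  apply: (card_le_bigcup (B := fun l => [set v in V | inc v l])) => [|l].
    apply/subsetP => v vV; have [l /andP[u0l vl]] := line_through (neq_UV u0U vV).
    apply/bigcupP; exists l; last by rewrite inE vV.
    rewrite !inE u0l andbT; apply/norP; split; apply: contraTneq vl => ->.
      exact: secantUU_offV u0U u1U vV n01 u0lU u1lU.
    exact: secantUU_offV u0U uU vV n0u u0m um.
  rewrite !inE => /andP[_ u0l]; apply/card_le1_eqP => v' v.
  rewrite !inE => /andP[v'V v'l] /andP[vV vl].
  exact: edge_lineV u0U vV v'V u0l vl v'l.
have pencil2 : [set lU; m] \subset [set l | inc u0 l].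
  by apply/subsetP => l; rewrite !inE => /orP[] /eqP->.
have := subset_leq_card pencil2.
by rewrite muln1 cardsD (setIidPr pencil2) cards2 nlm card_pencil /=; lia.
Qed.

Section LineOfU.

Variable lU : L.
Hypothesis U_on_lU : {in U, forall u, inc u lU}.

Let W := [set x | inc x lU] :\: U.

Lemma card_W : #|W| = q.+1 - #|U|.
Proof.
rewrite cardsD card_line (setIidPr _) //.
by apply/subsetP => u uU; rewrite inE U_on_lU.
Qed.

Lemma V_off_lU v : v \in V -> ~~ inc v lU.
Proof.
have /card_gt1P[u0 [u1 [u0U u1U n01]]] := U_gt1.
by move=> vV; apply: (secantUU_offV u0U u1U vV n01); apply: U_on_lU.
Qed.

Lemma secantVV_meets_W l v v' : v \in V -> v' \in V -> v != v' ->
  inc v l -> inc v' l -> exists2 x, x \in W & inc x l.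
Proof.
move=> vV v'V nvv' vl v'l.
have nllU : l != lU by apply: contraTneq vl => ->; apply: V_off_lU.
have [x /andP[xl xlU]] := meet_point nllU.
exists x => //; rewrite !inE xlU andbT; apply: contraTN xl => xU.
exact: secantVV_offU xU vV v'V nvv' vl v'l.
Qed.

Lemma card_V_on_line_le m x0 v1 : x0 \in W -> inc x0 m -> v1 \in V -> ~~ inc v1 m ->
  #|[set v in V | inc v m]| <= #|W|.-1.
Proof.
move=> x0W x0m v1V v1m.
have -> : #|W|.-1 = #|W :\ x0| * 1 by rewrite muln1 (cardsD1 x0 W) x0W.
apply: (card_le_bigcup (B := fun x => [set v in V | inc v m & collinear v1 x v])).
  apply/subsetP => v; rewrite inE => /andP[vV vm].
  have nv1v : v1 != v by apply: contraNneq v1m => ->.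
  have [l /andP[v1l vl]] := line_through nv1v.
  have [x xW xl] := secantVV_meets_W v1V vV nv1v v1l vl.
  apply/bigcupP; exists x.
    rewrite in_setD1 xW andbT; apply/eqP => ex; rewrite {}ex in xl.
    have nx0v : x0 != v.
      by apply: contraTneq x0W => ->; rewrite /W !inE (negbTE (V_off_lU vV)) andbF.
    by rewrite -(line_uniq nx0v xl vl x0m vm) v1l in v1m.
  by rewrite inE vV vm; apply/existsP; exists l; rewrite v1l xl.
move=> x /setD1P[_ xW]; apply/card_le1_eqP => v' v; rewrite !inE.
move=> /and3P[v'V v'm /existsP[l' /and3P[v1l' xl' v'l']]].
move=> /and3P[vV vm /existsP[l /and3P[v1l xl vl]]].
have nv1x : v1 != x.
  by apply: contraTneq xW => <-; rewrite /W !inE (negbTE (V_off_lU v1V)) andbF.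
rewrite -(line_uniq nv1x v1l' xl' v1l xl) in vl.
case: (eqVneq v v') => // nvv'; move: v1l'.
by rewrite (line_uniq nvv' vl v'l' vm v'm) (negbTE v1m).
Qed.

Lemma card_V_le : (forall m, exists2 v, v \in V & ~~ inc v m) ->
  #|V|.-1 <= #|W| * #|W|.-2.
Proof.
move=> V_noncollinear; case: (set_0Vmem V) => [-> | [v0 v0V]]; first by rewrite cards0.
have -> : #|V|.-1 = #|V :\ v0| by rewrite (cardsD1 v0 V) v0V.
apply: (card_le_bigcup (B := fun x => [set v in V :\ v0 | collinear v0 x v])) => [|x xW].
  apply/subsetP => v /setD1P[nvv0 vV].
  have nv0v : v0 != v by rewrite eq_sym.
  have [l /andP[v0l vl]] := line_through nv0v.
  have [x xW xl] := secantVV_meets_W v0V vV nv0v v0l vl.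
  apply/bigcupP; exists x => //; rewrite !inE nvv0 vV /=.
  by apply/existsP; exists l; rewrite v0l xl vl.
have nv0x : v0 != x.
  by apply: contraTneq xW => <-; rewrite /W !inE (negbTE (V_off_lU v0V)) andbF.
have [m /andP[v0m xm]] := line_through nv0x.
have [v1 v1V v1m] := V_noncollinear m.
have fiber_on_m :
    [set v in V :\ v0 | collinear v0 x v] \subset [set v in V | inc v m] :\ v0.
  apply/subsetP => v; rewrite !inE => /andP[/andP[nvv0 vV]].
  case/existsP=> l /and3P[v0l xl vl].
  by rewrite nvv0 vV -(line_uniq nv0x v0l xl v0m xm).
apply: leq_trans (subset_leq_card fiber_on_m) _.
have := card_V_on_line_le xW xm v1V v1m.
rewrite (cardsD1 v0 [set v in V | inc v m]) !inE v0V v0m /=; lia.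
Qed.

End LineOfU.

Theorem bipartite_two_lines : (q.+1 - #|U|) * (q - #|U|).-1 < q.-1 ->
  exists l1 l2, {in U :|: V, forall x, inc x l1 || inc x l2}.
Proof.
move=> small; have [lU U_on_lU] := U_collinear.
case: (pickP [pred m | [forall v in V, inc v m]]) => [m /forall_inP V_on_m | none].
  by exists lU, m => x /setUP[/U_on_lU-> | /V_on_m->]; rewrite ?orbT.
have := card_V_le U_on_lU (fun m => elimT forall_inPn (negbT (none m))).
rewrite (card_W U_on_lU); have -> : (q.+1 - #|U|).-2 = (q - #|U|).-1 by lia.
move=> V_small; exfalso; lia.
Qed.

End BipartiteConfiguration.

End ProjectivePlane.

Section Embedding.

Variables (P L : finType) (inc : P -> L -> bool) (q a b : nat).
Variable phi : Kvert a b -> P.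
Hypotheses (plane : projective_plane inc q) (emb : embedding_Kab inc phi).

Local Notation U := [set phi (inl u) | u : 'I_a].
Local Notation V := [set phi (inr v) | v : 'I_b].

Lemma embedding_disjoint : [disjoint U & V].
Proof.
rewrite disjoint_subset; apply/subsetP => _ /imsetP[u _ ->].
by rewrite inE; apply/imsetP => -[v _ /(proj1 emb)].
Qed.

Lemma card_embedding_U : #|U| = a.
Proof. by rewrite card_imset ?card_ord // => i j /(proj1 emb) []. Qed.

Lemma card_embedding_V : #|V| = b.
Proof. by rewrite card_imset ?card_ord // => i j /(proj1 emb) []. Qed.

Lemma embedding_edge_line l x x' y y' :
  x \in U -> x' \in U -> y \in V -> y' \in V ->
  inc x l -> inc x' l -> inc y l -> inc y' l -> x = x' /\ y = y'.
Proof.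
move=> /imsetP[u _ ->] /imsetP[u' _ ->] /imsetP[v _ ->] /imsetP[v' _ ->] ul u'l vl v'l.
have nUV i j : phi (inl i) != phi (inr j) by apply/eqP => /(proj1 emb).
have [-> ->] // : u = u' /\ v = v'.
apply: (proj2 emb).
by rewrite (pjoin_eq plane (nUV _ _) ul vl) (pjoin_eq plane (nUV _ _) u'l v'l).
Qed.

Lemma embedding_lineU l x x' y : x \in U -> x' \in U -> y \in V ->
  inc x l -> inc x' l -> inc y l -> x = x'.
Proof.
by move=> xU x'U yV xl x'l yl; case: (embedding_edge_line xU x'U yV yV xl x'l yl yl).
Qed.

Lemma embedding_lineV l x y y' : x \in U -> y \in V -> y' \in V ->
  inc x l -> inc y l -> inc y' l -> y = y'.
Proof.
by move=> xU yV y'V xl yl y'l; case: (embedding_edge_line xU xU yV y'V xl xl yl y'l).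
Qed.

End Embedding.

Theorem theorem3p9 (P L : finType) (inc : P -> L -> bool) (q n : nat)
    (phi : Kvert (q - n) q -> P) :
  projective_plane inc q ->
  2 <= q - n <= q ->
  embedding_Kab inc phi ->
  n ^ 2 < q ->
  exists l1 l2 : L, forall x : Kvert (q - n) q, inc (phi x) l1 || inc (phi x) l2.
Proof.
move=> plane /andP[two_le _] emb n2_lt.
have [|||l1 [l2 cover]] := bipartite_two_lines plane (embedding_disjoint emb)
  (embedding_lineU plane emb) (embedding_lineV plane emb).
- by rewrite (card_embedding_U emb).
- by rewrite (card_embedding_V emb).
- rewrite (card_embedding_U emb); nia.
by exists l1, l2 => -[u | v]; apply: cover; rewrite inE imset_f ?orbT.
Qed.
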